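(* Let $A^n, A^{n+1}$ be real $N\times N$ matrices satisfying condition (M), let $D=\mathrm{diag}(d_{11},\dots,d_{NN})$ with $d_{ii}>0$ and $\sum_i d_{ii}a^{n+1}_{ij}\ge0$ for every $j$, and let $B^n(\cdot),B^{n+1}(\cdot)$ be limiter-dependent matrices such that $\sum_i d_{ii}b^{n+1}_{ij}(\alpha)=0$ for all $j$ and all $\alpha$. Let $\sigma\in[0,1]$, $\gamma\in(0,1)$, set $s_j=d_{jj}+\Delta t\,\sigma\sum_i d_{ii}a^{n+1}_{ij}$, and let $\Delta t>0$ satisfy $$\Delta t\,\sigma\,\|DB^{n+1}(\mathbf 1)\|_1\le\gamma\min_j s_j .$$ Then for all $\alpha^n,\alpha^{n+1}\in[0,1]^{N-1}$ and all $y^n,g\in\mathbb R^N$ the matrix $E+\Delta t\,\sigma\left(A^{n+1}-B^{n+1}(\alpha^{n+1})\right)$ is invertible, and the solution $y^{n+1}$ of $$\left[E+\Delta t\,\sigma\left(A^{n+1}-B^{n+1}(\alpha^{n+1})\right)\right]y^{n+1}=\left[E-\Delta t(1-\sigma)\left(A^n-B^n(\alpha^n)\right)\right]y^n+\Delta t\,g$$ satisfies $$\|y^{n+1}\|_1\le M\left(M_1\|y^n\|_1+\Delta t\,\|g\|_1\right),\quad M=\frac{\|D\|_1}{(1-\gamma)\min_j s_j},\quad M_1=\|E-\Delta t(1-\sigma)A^n\|_1+\Delta t(1-\sigma)\|B^n(\mathbf 1)\|_1 .$$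
   Context: $E$ is the $N\times N$ identity. Condition (M) on a real $N\times N$ matrix $A=\{a_{ij}\}$: $a_{ii}\ge 0$ for all $i$ and $a_{ij}\le 0$ for all $i\ne j$. Norms: $\|y\|_1=\sum_i|y_i|$, $\|M\|_1=\max_j\sum_i|m_{ij}|$. A limiter-dependent matrix is a map $\alpha=(\alpha_1,\dots,\alpha_{N-1})\in\mathbb R^{N-1}\mapsto B(\alpha)=\{b_{ij}(\alpha)\}$ ($N\times N$) of the form $b_{ij}(\alpha)=\alpha_{\kappa(i,j)}\beta_{ij}$ for $i\ne j$ and $b_{ii}(\alpha)=-\sum_{j\ne i}b_{ij}(\alpha)$, where $\beta_{ij}\le0$ are fixed numbers and $\kappa(i,j)\in\{1,\dots,N-1\}$ are fixed indices. $\mathbf 1$ is the vector with all entries $1$. *)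

From mathcomp Require Import all_boot all_order all_algebra.
Set Implicit Arguments. Unset Strict Implicit. Unset Printing Implicit Defensive.
Import Order.TTheory GRing.Theory Num.Theory.
Local Open Scope ring_scope.

Section Defs.
Variable R : realFieldType.
Variable N : nat.

Definition condM (A : 'M[R]_N) : Prop :=
  (forall i, 0 <= A i i) /\ (forall i j, i != j -> A i j <= 0).

Definition vnorm1 (y : 'cV[R]_N) : R := \sum_i `|y i 0|.

Definition mnorm1 (M : 'M[R]_N) : R :=
  \big[Order.max/0]_(j < N) \sum_(i < N) `|M i j|.

(* Limiter-dependent matrix B(alpha) built from fixed beta_ij (i<>j) and
   indices kappa(i,j) in {1,...,N-1}; alpha is indexed by nat, only the
   entries 1..N-1 matter. *)
Definition limmx (beta : 'M[R]_N) (kappa : 'I_N -> 'I_N -> nat)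
  (alpha : nat -> R) : 'M[R]_N :=
  \matrix_(i, j) if i == j then - \sum_(k < N | k != i) alpha (kappa i k) * beta i k
                 else alpha (kappa i j) * beta i j.

Definition limiter_data (beta : 'M[R]_N) (kappa : 'I_N -> 'I_N -> nat) : Prop :=
  forall i j, i != j -> beta i j <= 0 /\ (1 <= kappa i j <= N.-1)%N.

Definition in_unit_box (alpha : nat -> R) : Prop :=
  forall k, (1 <= k <= N.-1)%N -> 0 <= alpha k <= 1.

Definition ones_lim : nat -> R := fun _ => 1.

Definition diagD (d : 'I_N -> R) : 'M[R]_N := diag_mx (\row_i d i).
End Defs.

From mathcomp Require Import all_boot all_order all_algebra.
From mathcomp Require Import ring lra.
Import Order.TTheory GRing.Theory Num.Theory.
Local Open Scope ring_scope.
Set Implicit Arguments. Unset Strict Implicit. Unset Printing Implicit Defensive.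

(* Write c = dt*sigma and c' = dt*(1-sigma).  The proof is an l1 estimate.
   1. Norms: ||.||_1 is subadditive, homogeneous, and ||M y||_1 <= ||M||_1 ||y||_1;
      a matrix that is column diagonally dominant with column margins m_j
      satisfies sum_j m_j |z_j| <= ||P z||_1.
   2. Limiters: every entry of B(alpha), alpha in [0,1]^(N-1), is bounded in
      absolute value by the corresponding entry of B(1), so the norms of B(alpha)
      and D B(alpha) are bounded by those of B(1) and D B(1).
   3. Implicit part: since A^{n+1} satisfies (M), D(E + c A^{n+1}) is column
      diagonally dominant with margins exactly s_j.  Treating c D B^{n+1} as a
      perturbation, the CFL condition gives
      (1-gamma) smin ||z||_1 <= ||D||_1 ||L z||_1 for L = E + c(A^{n+1} - B^{n+1}),
      hence L is injective, hence invertible.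
   4. Explicit part: the right-hand side has l1 norm at most M1 ||y^n||_1 + dt ||g||_1. *)

Section Norms.
Variables (R : realFieldType) (N : nat).
Implicit Types (M P : 'M[R]_N) (y z : 'cV[R]_N).

Lemma mnorm1_col M j : \sum_i `|M i j| <= mnorm1 M.
Proof. exact: (le_bigmax 0 (fun j => \sum_i `|M i j|)). Qed.

Lemma mnorm1_ge0 M : 0 <= mnorm1 M.
Proof. exact: bigmax_ge_id. Qed.

Lemma mnorm1_mono M P : (forall i j, `|M i j| <= `|P i j|) -> mnorm1 M <= mnorm1 P.
Proof.
move=> MP; apply: bigmax_le => [|j _]; first exact: mnorm1_ge0.
by apply: le_trans (mnorm1_col P j); apply: ler_sum => i _.
Qed.

Lemma vnorm1_ge0 y : 0 <= vnorm1 y.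
Proof. exact: sumr_ge0. Qed.

Lemma vnorm1_0 : vnorm1 (0 : 'cV[R]_N) = 0.
Proof. by rewrite /vnorm1 big1 // => i _; rewrite mxE normr0. Qed.

Lemma vnorm1D y z : vnorm1 (y + z) <= vnorm1 y + vnorm1 z.
Proof.
rewrite /vnorm1 -big_split /=; apply: ler_sum => i _; rewrite mxE; exact: ler_normD.
Qed.

Lemma vnorm1Z a y : vnorm1 (a *: y) = `|a| * vnorm1 y.
Proof. rewrite /vnorm1 mulr_sumr; apply: eq_bigr => i _; by rewrite mxE normrM. Qed.

Lemma vnorm1_eq0 y : vnorm1 y <= 0 -> y = 0.
Proof.
move=> y_le0; have /psumr_eq0P y0 : vnorm1 y = 0.
  by apply/eqP; rewrite eq_le y_le0 vnorm1_ge0.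
by apply/matrixP => i j; rewrite ord1 mxE; apply/eqP; rewrite -normr_eq0 y0.
Qed.

Lemma vnorm1_mul M y : vnorm1 (M *m y) <= mnorm1 M * vnorm1 y.
Proof.
apply: le_trans (_ : \sum_i \sum_j `|M i j| * `|y j 0| <= _).
  apply: ler_sum => i _; rewrite mxE; apply: le_trans (ler_norm_sum _ _ _) _.
  by apply: ler_sum => j _; rewrite normrM.
rewrite exchange_big /= /vnorm1 mulr_sumr; apply: ler_sum => j _.
by rewrite -mulr_suml ler_wpM2r ?mnorm1_col.
Qed.

Lemma row_lower P z i :
  `|P i i| * `|z i 0| - \sum_(j | j != i) `|P i j| * `|z j 0| <= `|(P *m z) i 0|.
Proof.
rewrite mxE [\sum_j _](bigD1 i) //= lerBlDr -normrM.
set S := \sum_(j | j != i) P i j * z j 0.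
rewrite -{1}[P i i * z i 0](addrK S); apply: le_trans (ler_normB _ _) _.
apply: lerD => //; apply: le_trans (ler_norm_sum _ _ _) _.
by apply: ler_sum => j _; rewrite normrM.
Qed.

(* Column diagonal dominance: summing row_lower and exchanging the double sum,
   each |z_j| is weighted by the margin of column j. *)
Lemma vnorm1_lower P z :
  \sum_j `|z j 0| * (`|P j j| - \sum_(i | i != j) `|P i j|) <= vnorm1 (P *m z).
Proof.
apply: le_trans (ler_sum _ (fun i _ => row_lower P z i)).
have swap : \sum_j `|z j 0| * \sum_(i | i != j) `|P i j| =
            \sum_i \sum_(j | j != i) `|P i j| * `|z j 0|.
  under eq_bigr => j _ do rewrite mulr_sumr big_mkcond.
  under [RHS]eq_bigr => i _ do rewrite big_mkcond.
  rewrite exchange_big; apply: eq_bigr => i _; apply: eq_bigr => j _.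
  by rewrite eq_sym; case: ifP => _ //; rewrite mulrC.
under eq_bigr => j _ do rewrite mulrBr.
by rewrite !sumrB swap; under eq_bigr => j _ do rewrite mulrC.
Qed.

Lemma unitmx_inj (L : 'M[R]_N) : (forall z : 'cV[R]_N, L *m z = 0 -> z = 0) ->
  L \in unitmx.
Proof.
move=> Linj; rewrite -unitmx_tr -row_free_unit -kermx_eq0.
apply/eqP/row_matrixP => i; rewrite row0.
set u := row i (kermx L^T).
have uL : u *m L^T = 0 by apply/sub_kermxP; rewrite row_sub.
have : L *m u^T = 0 by apply: trmx_inj; rewrite trmx_mul trmxK uL trmx0.
by move/Linj/(congr1 trmx); rewrite trmxK trmx0.
Qed.

End Norms.

Section Limiters.
Variables (R : realFieldType) (N : nat).
Variables (beta : 'M[R]_N) (kappa : 'I_N -> 'I_N -> nat) (alpha : nat -> R).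
Hypothesis (Hbeta : limiter_data beta kappa) (Halpha : in_unit_box N alpha).

(* Limiting only shrinks the entries: |B(alpha)_ij| <= |B(1)_ij|.  Off the
   diagonal this is 0 <= alpha <= 1; on the diagonal all summands have one sign. *)
Lemma limmx_entry i j :
  `|limmx beta kappa alpha i j| <= `|limmx beta kappa (@ones_lim R) i j|.
Proof.
have offdiag k : i != k -> `|alpha (kappa i k) * beta i k| <= `|beta i k|.
  move=> ik; have [_ /Halpha/andP[a0 a1]] := Hbeta ik.
  by rewrite normrM ger0_norm // ler_piMl.
rewrite !mxE /ones_lim; case: eqP => [_|/eqP ij]; last by rewrite mul1r offdiag.
have beta_le0 k : k != i -> beta i k <= 0.
  by move=> ki; have [] := Hbeta (_ : i != k); rewrite // eq_sym.
rewrite !normrN [X in _ <= X]ler0_norm; last first.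
  by apply: sumr_le0 => k ki; rewrite mul1r beta_le0.
apply: le_trans (ler_norm_sum _ _ _) _; rewrite -sumrN.
apply: ler_sum => k ki; rewrite mul1r -ler0_norm ?beta_le0 //.
by apply: offdiag; rewrite eq_sym.
Qed.

Lemma mnorm1_limmx :
  mnorm1 (limmx beta kappa alpha) <= mnorm1 (limmx beta kappa (@ones_lim R)).
Proof. exact/mnorm1_mono/limmx_entry. Qed.

Lemma mnorm1_diag_limmx (d : 'I_N -> R) : (forall i, 0 < d i) ->
  mnorm1 (diagD d *m limmx beta kappa alpha)
  <= mnorm1 (diagD d *m limmx beta kappa (@ones_lim R)).
Proof.
move=> d_gt0; apply: mnorm1_mono => i j.
move: (limmx_entry i j); rewrite /diagD !mul_diag_mx !mxE !normrM => entry_le.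
by rewrite ler_wpM2l.
Qed.

End Limiters.

Section ImplicitOperator.
Variables (R : realFieldType) (N : nat).
Variables (A : 'M[R]_N) (d : 'I_N -> R) (c : R).
Hypotheses (HA : condM A) (d_gt0 : forall i, 0 < d i) (c_ge0 : 0 <= c).

Definition col_margin (j : 'I_N) : R := d j + c * \sum_i d i * A i j.

(* Because A satisfies (M), D(E + cA) has a nonnegative diagonal and
   nonpositive off-diagonal entries, so its column margin is its column sum. *)
Lemma col_margin_diag_dominance j (P := diagD d *m (1%:M + c *: A)) :
  `|P j j| - \sum_(i | i != j) `|P i j| = col_margin j.
Proof.
have Pij i : P i j = d i * ((i == j)%:R + c * A i j).
  by rewrite /P /diagD mul_diag_mx !mxE.
have Pjj_ge0 : 0 <= P j j.
  rewrite Pij eqxx; apply: mulr_ge0; first exact: ltW.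
  by apply: addr_ge0 => //; apply: mulr_ge0 (HA.1 j).
have off_le0 i : i != j -> P i j <= 0.
  move=> ij; rewrite Pij (negbTE ij) add0r.
  by apply: mulr_ge0_le0; [exact: ltW | apply: mulr_ge0_le0 (HA.2 i j ij)].
rewrite ger0_norm // (eq_bigr (fun i => - P i j)); last by move=> i /off_le0/ler0_norm.
rewrite sumrN opprK.
have -> : P j j + \sum_(i | i != j) P i j = \sum_i P i j by rewrite [RHS](bigD1 j).
under eq_bigr => i _ do rewrite Pij mulrDr.
rewrite big_split /= (bigD1 j) //= eqxx mulr1 big1 ?addr0; last first.
  by move=> i ij; rewrite (negbTE ij) mulr0.
by rewrite /col_margin mulr_sumr; congr (_ + _); apply: eq_bigr => i _; ring.
Qed.

Variables (B : 'M[R]_N) (m gamma : R).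
Hypothesis m_le : forall j, m <= col_margin j.
Hypothesis CFL : c * mnorm1 (diagD d *m B) <= gamma * m.

Let L := 1%:M + c *: (A - B).

(* Lower l1 bound for L: the perturbation c D B eats at most a fraction gamma
   of the dominance margin m of D(E + cA). *)
Lemma implicit_lower_bound z :
  (1 - gamma) * m * vnorm1 z <= mnorm1 (diagD d) * vnorm1 (L *m z).
Proof.
set P := diagD d *m (1%:M + c *: A); set Q := diagD d *m B.
have dominance : m * vnorm1 z <= vnorm1 (P *m z).
  apply: le_trans (vnorm1_lower P z).
  rewrite /vnorm1 mulr_sumr; apply: ler_sum => j _.
  by rewrite col_margin_diag_dominance mulrC ler_wpM2l.
have split_P : P *m z = diagD d *m (L *m z) + c *: (Q *m z).
  rewrite mulmxA /L /P /Q !mulmxDr -!scalemxAr mulmxBr scalerBr addrA.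
  by rewrite mulmxBl -scalemxAl subrK.
have triangle := vnorm1D (diagD d *m (L *m z)) (c *: (Q *m z)).
rewrite -split_P vnorm1Z (ger0_norm c_ge0) in triangle.
have D_bound := vnorm1_mul (diagD d) (L *m z).
have perturbation : c * vnorm1 (Q *m z) <= gamma * m * vnorm1 z.
  apply: le_trans (ler_wpM2l c_ge0 (vnorm1_mul Q z)) _.
  by rewrite mulrA ler_wpM2r ?vnorm1_ge0.
lra.
Qed.

Lemma implicit_unitmx : 0 < m -> gamma < 1 -> L \in unitmx.
Proof.
move=> m_gt0 gamma_lt1; apply: unitmx_inj => z Lz0; apply: vnorm1_eq0.
have := implicit_lower_bound z; rewrite Lz0 vnorm1_0 mulr0 pmulr_rle0 //.
by rewrite mulr_gt0 // subr_gt0.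
Qed.

End ImplicitOperator.

Lemma explicit_bound (R : realFieldType) (N : nat) (A B : 'M[R]_N)
    (y g : 'cV[R]_N) (c' dt : R) :
  0 <= c' -> 0 <= dt ->
  vnorm1 ((1%:M - c' *: (A - B)) *m y + dt *: g)
  <= (mnorm1 (1%:M - c' *: A) + c' * mnorm1 B) * vnorm1 y + dt * vnorm1 g.
Proof.
move=> c'_ge0 dt_ge0; set T := 1%:M - c' *: A.
have -> : (1%:M - c' *: (A - B)) *m y = T *m y + c' *: (B *m y).
  by rewrite scalerBr opprB addrCA addrC mulmxDl scalemxAl.
have outer := vnorm1D (T *m y + c' *: (B *m y)) (dt *: g).
have inner := vnorm1D (T *m y) (c' *: (B *m y)).
rewrite vnorm1Z (ger0_norm dt_ge0) in outer.
rewrite vnorm1Z (ger0_norm c'_ge0) in inner.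
have T_bound := vnorm1_mul T y.
have B_bound := ler_wpM2l c'_ge0 (vnorm1_mul B y).
lra.
Qed.

Theorem mainTheorem6 (R : realFieldType) (n : nat)
  (An An1 : 'M[R]_n.+1) (d : 'I_n.+1 -> R)
  (betan betan1 : 'M[R]_n.+1) (kappan kappan1 : 'I_n.+1 -> 'I_n.+1 -> nat)
  (sigma gamma dt : R) :
  condM An -> condM An1 ->
  (forall i, 0 < d i) ->
  (forall j, 0 <= \sum_i d i * An1 i j) ->
  limiter_data betan kappan -> limiter_data betan1 kappan1 ->
  (forall alpha j, \sum_i d i * limmx betan1 kappan1 alpha i j = 0) ->
  0 <= sigma <= 1 -> 0 < gamma < 1 -> 0 < dt ->
  let s := fun j => d j + dt * sigma * \sum_i d i * An1 i j in
  let smin := \big[Order.min/s ord0]_(j < n.+1) s j in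
  dt * sigma * mnorm1 (diagD d *m limmx betan1 kappan1 (@ones_lim R)) <= gamma * smin ->
  let M := mnorm1 (diagD d) / ((1 - gamma) * smin) in
  let M1 := mnorm1 (1%:M - (dt * (1 - sigma)) *: An)
            + dt * (1 - sigma) * mnorm1 (limmx betan kappan (@ones_lim R)) in
  forall (alphan alphan1 : nat -> R) (yn g : 'cV[R]_n.+1),
    in_unit_box n.+1 alphan -> in_unit_box n.+1 alphan1 ->
    let L := 1%:M + (dt * sigma) *: (An1 - limmx betan1 kappan1 alphan1) in
    L \in unitmx /\
    (forall yn1 : 'cV[R]_n.+1,
       L *m yn1 = (1%:M - (dt * (1 - sigma)) *: (An - limmx betan kappan alphan)) *m yn
                  + dt *: g ->
       vnorm1 yn1 <= M * (M1 * vnorm1 yn + dt * vnorm1 g)).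
Proof.
move=> _ hA1 d_gt0 dA_ge0 hbn hbn1 _ /andP[sg0 sg1] /andP[ga0 ga1] dt_gt0 s smin CFL
  M M1 alphan alphan1 yn g han han1 L.
have c_ge0 : 0 <= dt * sigma by apply: mulr_ge0 (ltW dt_gt0) sg0.
have c'_ge0 : 0 <= dt * (1 - sigma) by apply: mulr_ge0 (ltW dt_gt0) _; rewrite subr_ge0.
have s_gt0 j : 0 < s j.
  by apply: lt_le_trans (d_gt0 j) _; rewrite lerDl (mulr_ge0 c_ge0).
have smin_gt0 : 0 < smin by rewrite /smin; elim/big_ind: _ => // x y; rewrite lt_min => ->.
have smin_le j : smin <= s j by apply: bigmin_le.
have CFL_limited := le_trans (ler_wpM2l c_ge0 (mnorm1_diag_limmx hbn1 han1 d_gt0)) CFL.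
have lower := implicit_lower_bound hA1 d_gt0 c_ge0 smin_le CFL_limited.
split; first exact (implicit_unitmx hA1 d_gt0 c_ge0 smin_le CFL_limited smin_gt0 ga1).
move=> yn1 Lyn1; have lower_yn1 := lower yn1; rewrite Lyn1 in lower_yn1.
have rhs : vnorm1 ((1%:M - (dt * (1 - sigma)) *: (An - limmx betan kappan alphan)) *m yn
                   + dt *: g) <= M1 * vnorm1 yn + dt * vnorm1 g.
  apply: le_trans (explicit_bound _ _ _ _ c'_ge0 (ltW dt_gt0)) _.
  rewrite lerD2r ler_wpM2r ?vnorm1_ge0 // lerD2l ler_wpM2l //.
  exact: mnorm1_limmx.
have rhsD := ler_wpM2l (mnorm1_ge0 (diagD d)) rhs.
have k_gt0 : 0 < (1 - gamma) * smin by rewrite mulr_gt0 ?subr_gt0.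
rewrite /M mulrAC ler_pdivlMr // mulrC; lra.
Qed.
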